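(* (Symmetry extension lemma.) Let $H$ and $L$ be linear subspaces of $\mathbb{R}^n$ such that $H\cap L^\perp=\{o\}$ and $\dim H<\dim L$. If $E\subset S^{n-1}$ is nonempty, closed, invariant under $R_H$, and invariant under every element of $O(n)_{L^\perp}$, then $E$ is invariant under every element of $O(n)_{(H+L)^\perp}$. The same conclusion holds if invariance under $R_H$ is replaced by invariance under $R_{H^\perp}$.
   Context: For a linear subspace $S$ of $\mathbb{R}^n$, $O(n)_S$ is the pointwise stabilizer of $S$ in $O(n)$ (isometries in $O(n)$ acting as the identity on $S$), $S^\perp$ is its orthogonal complement, and $R_S$ is the reflection $x\mapsto 2(x|S)-x$ with $x|S$ the orthogonal projection onto $S$. A set $E$ is invariant under $\phi$ if $\phi E=E$. $o$ is the origin, $S^{n-1}$ the unit sphere, $H+L$ the vector sum. *)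

From HB Require Import structures.
From mathcomp Require Import all_boot all_order all_algebra.
From mathcomp Require Import all_classical all_reals all_analysis.
Set Implicit Arguments. Unset Strict Implicit. Unset Printing Implicit Defensive.
Import Order.TTheory GRing.Theory Num.Theory numFieldNormedType.Exports.
Local Open Scope ring_scope.
Local Open Scope classical_set_scope.

Section Defs.
Variables (R : realType) (n : nat).
Local Notation V := 'rV[R]_n.

Definition dotv (x y : V) : R := (x *m y^T) 0 0.

Definition orthc (S : set V) : set V := [set x | forall y, S y -> dotv x y = 0].

Definition oproj (S : set V) (x : V) : V :=
  xget 0 [set p | S p /\ orthc S (x - p)].

Definition reflS (S : set V) (x : V) : V := 2%:R *: oproj S x - x.

Definition usphere : set V := [set x | dotv x x = 1].

(* O(n) : orthogonal matrices, acting on row vectors by x |-> x *m Q *)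
Definition orthmx (Q : 'M[R]_n) : Prop := Q *m Q^T = 1%:M.

Definition stabO (S : set V) (Q : 'M[R]_n) : Prop :=
  orthmx Q /\ forall x, S x -> x *m Q = x.

Definition is_invariant (phi : V -> V) (E : set V) : Prop := phi @` E = E.

End Defs.

From HB Require Import structures.
From mathcomp Require Import all_boot all_order all_algebra.
From mathcomp Require Import all_classical all_reals all_analysis.
From mathcomp Require Import ring lra.
Import Order.TTheory GRing.Theory Num.Theory numFieldNormedType.Exports.
Local Open Scope ring_scope.
Set Implicit Arguments. Unset Strict Implicit. Unset Printing Implicit Defensive.

(* Call a vector v E-stable when the Householder reflection in v maps E into
   itself.  Reflections in vectors of L fix L^perp, so every v in L is
   E-stable; conjugating by an orthogonal map that preserves E keeps
   E-stability, so the E-stable vectors are closed under reflections in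
   E-stable vectors and under R_H (and under -R_H = R_{H^perp}), hence contain
   R_H L too.  A = L and B = R_H L meet nontrivially (dim H < dim L yields
   e <> 0 in L with e|H = 0, and R_H e = -e), and A + B contains H + L because
   H meets L^perp trivially, so that projecting L onto H is onto.
   For subspaces A, B with A :&: B <> 0, the orbit of A under the group
   generated by reflections in vectors of A and of B is all of A + B: a point
   of A + B close to some a in A, relative to |a|, is reached by two more
   reflections; transporting by the group, the same holds near any point of the
   orbit; and every point of A + B is joined to A by a segment avoiding 0,
   which is walked in small steps.  Finally, an orthogonal Q fixing
   (H + L)^perp maps each x to its reflection in x - xQ, a vector of H + L. *)

Section Dot.
Variables (R : realType) (n : nat).
Implicit Types (x y z : 'rV[R]_n) (Q : 'M[R]_n).
Local Notation dot := (@dotv R n).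

Lemma dotvE x y : dot x y = \sum_i x 0 i * y 0 i.
Proof. by rewrite /dotv mxE; apply: eq_bigr => i _; rewrite mxE. Qed.

Lemma dotvC x y : dot x y = dot y x.
Proof. by rewrite !dotvE; apply: eq_bigr => i _; rewrite mulrC. Qed.

Lemma dotvDl x y z : dot (x + y) z = dot x z + dot y z.
Proof. by rewrite !dotvE -big_split; apply: eq_bigr => i _; rewrite mxE mulrDl. Qed.

Lemma dotvZl a x y : dot (a *: x) y = a * dot x y.
Proof. by rewrite !dotvE mulr_sumr; apply: eq_bigr => i _; rewrite mxE mulrA. Qed.

Lemma dotvNl x y : dot (- x) y = - dot x y.
Proof. by rewrite -scaleN1r dotvZl mulN1r. Qed.

Lemma dotvBl x y z : dot (x - y) z = dot x z - dot y z.
Proof. by rewrite dotvDl dotvNl. Qed.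

Lemma dotv0l x : dot 0 x = 0.
Proof. by rewrite -(scale0r 0) dotvZl mul0r. Qed.

Lemma dotvDr x y z : dot x (y + z) = dot x y + dot x z.
Proof. by rewrite dotvC dotvDl !(dotvC x). Qed.

Lemma dotvZr a x y : dot x (a *: y) = a * dot x y.
Proof. by rewrite dotvC dotvZl dotvC. Qed.

Lemma dotvNr x y : dot x (- y) = - dot x y.
Proof. by rewrite dotvC dotvNl dotvC. Qed.

Lemma dotvBr x y z : dot x (y - z) = dot x y - dot x z.
Proof. by rewrite dotvC dotvBl !(dotvC x). Qed.

Lemma dotv0r x : dot x 0 = 0.
Proof. by rewrite dotvC dotv0l. Qed.

Lemma dotv_ge0 x : 0 <= dot x x.
Proof. by rewrite dotvE; apply: sumr_ge0 => i _; rewrite -expr2 sqr_ge0. Qed.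

Lemma dotv_eq0 x : dot x x = 0 -> x = 0.
Proof.
rewrite dotvE => /psumr_eq0P x0; apply/rowP => j; rewrite mxE.
by have /eqP := x0 (fun i _ => sqr_ge0 (x 0 i)) j isT; rewrite mulf_eq0 orbb => /eqP.
Qed.

Lemma dotv_gt0 x : x != 0 -> 0 < dot x x.
Proof.
by move=> x0; rewrite lt_def dotv_ge0 andbT; apply: contraNneq x0 => /dotv_eq0 ->.
Qed.

Lemma dotv_mulmx x y Q : dot (x *m Q) y = dot x (y *m Q^T).
Proof. by rewrite /dotv trmx_mul trmxK mulmxA. Qed.

Lemma dotv_CauchySchwarz x y : dot x y ^+ 2 <= dot x x * dot y y.
Proof.
have [->|x0] := eqVneq x 0; first by rewrite !dotv0l expr0n mul0r.
have xx0 := dotv_gt0 x0.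
pose t := dot x y / dot x x.
have tx : t * dot x x = dot x y by rewrite divfK ?gt_eqF.
have := dotv_ge0 (y - t *: x).
rewrite !(dotvBl, dotvBr, dotvZl, dotvZr) (dotvC y x) -tx => yt0.
set a := dot x x in xx0 yt0 *; set b := dot y y in yt0 *.
rewrite subrr mulr0 subr0 in yt0.
have := mulr_ge0 (ltW xx0) yt0; nra.
Qed.

Lemma exists_dotv_line x y r : y != 0 -> dot x x <= r ->
  exists t, dot (x + t *: y) (x + t *: y) = r.
Proof.
move=> y0 xr; have yy0 := dotv_gt0 y0.
set a := dot x x in xr *; set b := dot x y; set c := dot y y in yy0 *.
pose D := b ^+ 2 + c * (r - a).
have D0 : 0 <= D by rewrite addr_ge0 ?sqr_ge0 // mulr_ge0 ?subr_ge0 // ltW.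
exists ((Num.sqrt D - b) / c).
rewrite !(dotvDl, dotvDr, dotvZl, dotvZr) (dotvC y x) -/a -/b -/c.
set s := Num.sqrt D; set t := (s - b) / c.
have -> : a + t * b + (t * b + t * (t * c)) = a + (s ^+ 2 - b ^+ 2) / c.
  by rewrite /t; field; rewrite gt_eqF.
by rewrite sqr_sqrtr // /D; field; rewrite gt_eqF.
Qed.

Lemma dotv_segment_ge x y mu t : 0 <= dot x y -> 0 <= t <= 1 ->
  mu <= dot x x -> mu <= dot y y ->
  mu / 2 <= dot (x + t *: (y - x)) (x + t *: (y - x)).
Proof.
move=> xy0 /andP[t0 t1] mux muy.
have [mu_lt0|mu_ge0] := ltP mu 0; first by apply: le_trans (dotv_ge0 _); lra.
have -> : x + t *: (y - x) = (1 - t) *: x + t *: y.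
  by rewrite scalerBr scalerBl scale1r addrA addrAC.
rewrite !(dotvDl, dotvDr, dotvZl, dotvZr) (dotvC y x).
have cross_ge0 : 0 <= (1 - t) * t * dot x y by rewrite !mulr_ge0 ?subr_ge0.
have x_mu : 0 <= (1 - t) ^+ 2 * (dot x x - mu) by rewrite mulr_ge0 ?sqr_ge0 ?subr_ge0.
have y_mu : 0 <= t ^+ 2 * (dot y y - mu) by rewrite mulr_ge0 ?sqr_ge0 ?subr_ge0.
have mu_half : 0 <= mu * (t - 1 / 2) ^+ 2 by rewrite mulr_ge0 ?sqr_ge0.
nra.
Qed.

Lemma dotvB_le x y : dot (x - y) (x - y) <= 2 * dot x x + 2 * dot y y.
Proof.
have := dotv_ge0 (x + y).
by rewrite !(dotvBl, dotvBr, dotvDl, dotvDr) (dotvC y x); lra.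
Qed.

Lemma mx_dotv_bound (A : 'M[R]_n) :
  exists2 C, 0 <= C & forall x, dot (x *m A) (x *m A) <= C * dot x x.
Proof.
pose c j : 'rV[R]_n := (col j A)^T.
exists (\sum_j dot (c j) (c j)); first by apply: sumr_ge0 => j _; apply: dotv_ge0.
move=> x; rewrite (dotvE (x *m A)) mulr_suml; apply: ler_sum => j _.
have -> : (x *m A) 0 j = dot x (c j).
  by rewrite mxE dotvE; apply: eq_bigr => i _; rewrite !mxE.
by rewrite -expr2 mulrC dotv_CauchySchwarz.
Qed.

Lemma dotv_mx_inj (M N : 'M[R]_n) :
  (forall x y, dot x (y *m M) = dot x (y *m N)) -> M = N.
Proof.
move=> MN; apply/row_matrixP => i; rewrite !rowE; set y := 'e_i.
apply/eqP; rewrite -subr_eq0; apply/eqP/dotv_eq0.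
by rewrite dotvBr MN subrr.
Qed.

Lemma isometry_orthmx Q : (forall x y, dot (x *m Q) (y *m Q) = dot x y) -> orthmx Q.
Proof.
move=> QQ; apply: dotv_mx_inj => x y.
by rewrite mulmx1 mulmxA -dotv_mulmx QQ.
Qed.

Lemma dotv_orthmx Q x y : orthmx Q -> dot (x *m Q) (y *m Q) = dot x y.
Proof. by move=> QQ; rewrite dotv_mulmx -mulmxA QQ mulmx1. Qed.

Lemma orthmxM P Q : orthmx P -> orthmx Q -> orthmx (P *m Q).
Proof. by move=> PP QQ; apply: isometry_orthmx => x y; rewrite !mulmxA !dotv_orthmx. Qed.

Lemma orthmxN Q : orthmx Q -> orthmx (- Q).
Proof.
by move=> QQ; apply: isometry_orthmx => x y; rewrite !mulmxN dotvNl dotvNr opprK dotv_orthmx.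
Qed.

End Dot.

Section Projection.
Variables (R : realType) (n : nat).
Local Notation V := 'rV[R]_n.
Local Notation dot := (@dotv R n).
Implicit Types (U : {vspace V}) (x y z : V).

Definition oprojv U : V -> V := oproj [set y | y \in U].

Lemma oprojv_exists U x : exists p, p \in U /\ orthc [set y | y \in U] (x - p).
Proof.
rewrite -(span_basis (vbasisP U)); elim: (vbasis U : seq V) x => [|a s IH] x.
  by exists 0; split=> [|u /=]; rewrite ?mem0v // span_nil memv0 => /eqP->; rewrite dotv0r.
have [pa [pa_s a_perp]] := IH a; have [px [px_s x_perp]] := IH x.
(* [t] is 0 when [a' = 0], since [x / 0 = 0]. *)
pose a' := a - pa; pose t := dot (x - px) a' / dot a' a'.
have sub_s : (span s <= span (a :: s))%VS by rewrite span_cons addvSr.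
have perp_cons z : dot z a' = 0 -> orthc [set y | y \in span s] z ->
    orthc [set y | y \in span (a :: s)] z.
  move=> za' zs u /=; rewrite span_cons => /memv_addP[_ /vlineP[k ->] [w ws ->]].
  rewrite dotvDr dotvZr (zs w ws) addr0 -[a](subrK pa) dotvDr za' (zs pa pa_s).
  by rewrite addr0 mulr0.
exists (px + t *: a'); split.
  apply: memvD; first exact: (subvP sub_s).
  by apply/memvZ/memvB; [apply: memv_span; rewrite mem_head | apply: (subvP sub_s)].
have a'_s : orthc [set y | y \in span s] a' by [].
apply: perp_cons => [|u us]; rewrite opprD addrA dotvBl dotvZl.
  have [->|a'0] := eqVneq a' 0; first by rewrite !dotv0r mulr0 subr0.
  by rewrite divfK ?subrr // gt_eqF ?dotv_gt0.
by rewrite x_perp // a'_s // mulr0 subr0.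
Qed.

Lemma oprojv_mem U x : oprojv U x \in U.
Proof. by case: (xgetPex 0 (oprojv_exists U x)). Qed.

Lemma oprojv_orth U x u : u \in U -> dot (x - oprojv U x) u = 0.
Proof. by case: (xgetPex 0 (oprojv_exists U x)) => _; apply. Qed.

Lemma oprojv_uniq U x p : p \in U -> (forall u, u \in U -> dot (x - p) u = 0) ->
  oprojv U x = p.
Proof.
move=> pU p_perp; apply/eqP; rewrite -subr_eq0; apply/eqP/dotv_eq0.
have dU : oprojv U x - p \in U by rewrite memvB ?oprojv_mem.
rewrite {1}(_ : oprojv U x - p = (x - p) - (x - oprojv U x)).
  by rewrite dotvBl p_perp // oprojv_orth // subrr.
by rewrite opprB [RHS]addrC addrA subrK.
Qed.

Lemma oprojv_id U x : x \in U -> oprojv U x = x.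
Proof. by move=> xU; apply: oprojv_uniq => // u _; rewrite subrr dotv0l. Qed.

Lemma oprojv_is_linear U : linear (oprojv U).
Proof.
move=> a x y; apply: oprojv_uniq => [|u uU].
  by rewrite memvD ?memvZ ?oprojv_mem.
have -> : a *: x + y - (a *: oprojv U x + oprojv U y) =
    a *: (x - oprojv U x) + (y - oprojv U y).
  by rewrite scalerBr opprD addrACA.
by rewrite dotvDl dotvZl !oprojv_orth // mulr0 addr0.
Qed.

HB.instance Definition _ U :=
  GRing.isLinear.Build R V V *:%R (oprojv U) (oprojv_is_linear U).

Lemma dotv_oprojvl U x y : dot (oprojv U x) y = dot (oprojv U x) (oprojv U y).
Proof.
have /eqP := oprojv_orth y (oprojv_mem U x); rewrite dotvBl subr_eq0 => /eqP.
by rewrite dotvC => ->; rewrite dotvC.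
Qed.

Lemma dotv_oprojv U x y : dot (oprojv U x) y = dot x (oprojv U y).
Proof. by rewrite dotv_oprojvl dotvC -dotv_oprojvl dotvC. Qed.

Lemma orthc_orthc_mem U z :
  (forall y, orthc [set y | y \in U] y -> dot z y = 0) -> z \in U.
Proof.
move=> z_perp; suff <- : oprojv U z = z by apply: oprojv_mem.
apply/eqP; rewrite eq_sym -subr_eq0; apply/eqP/dotv_eq0.
rewrite {1}dotvBl (dotvC (oprojv U z)) oprojv_orth ?oprojv_mem // subr0.
by apply: z_perp => u; apply: oprojv_orth.
Qed.

Lemma oproj_orthc U x : oproj (orthc [set y | y \in U]) x = x - oprojv U x.
Proof.
apply: xget_unique => [|p [p_perp x_perp]].
  split=> [y yU|y y_perp]; first exact: oprojv_orth.
  by rewrite opprB addrC subrK dotvC; apply: y_perp; apply: oprojv_mem.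
have xpU : x - p \in U by apply: orthc_orthc_mem => y /x_perp.
suff -> : oprojv U x = x - p by rewrite opprB addrC subrK.
by apply: oprojv_uniq => // u uU; rewrite opprB addrC subrK; apply: p_perp.
Qed.

Definition reflmx U : 'M[R]_n := 2%:R *: lin1_mx (oprojv U) - 1%:M.

Lemma mul_reflmx U x : x *m reflmx U = 2%:R *: oprojv U x - x.
Proof. by rewrite mulmxBr mulmx1 -scalemxAr mul_rV_lin1. Qed.

Lemma reflS_mx U : reflS [set` U] = mulmxr (reflmx U).
Proof. by apply/funext => x; rewrite /= mul_reflmx. Qed.

Lemma reflS_orthc_mx U : reflS (orthc [set` U]) = mulmxr (- reflmx U).
Proof.
apply/funext => x; rewrite /reflS oproj_orthc /= mulmxN mul_reflmx.
by apply/rowP => i; rewrite !mxE; ring.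
Qed.

Lemma orthmx_reflmx U : orthmx (reflmx U).
Proof.
apply: isometry_orthmx => x y; rewrite !mul_reflmx.
rewrite !(dotvBl, dotvBr, dotvZl, dotvZr) (dotvC x (oprojv U y)).
by rewrite (dotv_oprojvl U x y) (dotv_oprojvl U y x) (dotvC (oprojv U y)); ring.
Qed.

End Projection.

Section Reflection.
Variables (R : realType) (n : nat).
Local Notation V := 'rV[R]_n.
Local Notation dot := (@dotv R n).
Implicit Types (u v w x y z : V) (Q : 'M[R]_n).

Definition householder v : 'M[R]_n := 1%:M - (2 / dot v v) *: (v^T *m v).

Lemma mul_householder x v : x *m householder v = x - (2 * dot x v / dot v v) *: v.
Proof.
rewrite mulmxBr mulmx1 -scalemxAr mulmxA [x *m v^T]mx11_scalar mul_scalar_mx.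
by rewrite scalerA mulrAC.
Qed.

Lemma householder_fix z v : dot z v = 0 -> z *m householder v = z.
Proof. by move=> zv; rewrite mul_householder zv mulr0 mul0r scale0r subr0. Qed.

Lemma householderN v : householder (- v) = householder v.
Proof. by rewrite /householder dotvNl dotvNr opprK mulmxN (linearN trmx) mulNmx opprK. Qed.

Lemma trmx_householder v : (householder v)^T = householder v.
Proof. by rewrite /householder linearB /= trmx1 linearZ /= trmx_mul trmxK. Qed.

Lemma orthmx_householder v : orthmx (householder v).
Proof.
apply: isometry_orthmx => x y; rewrite !mul_householder.
have [->|v0] := eqVneq v 0; first by rewrite !scaler0 !subr0.
have vv0 : dot v v != 0 by rewrite gt_eqF ?dotv_gt0.
by rewrite !(dotvBl, dotvBr, dotvZl, dotvZr) (dotvC v y); field.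
Qed.

Lemma householderK v : householder v *m householder v = 1%:M.
Proof. by have := orthmx_householder v; rewrite /orthmx trmx_householder. Qed.

Lemma householder_swap x y : dot x x = dot y y -> x *m householder (x - y) = y.
Proof.
move=> xy; rewrite mul_householder.
have [xy0|xy0] := eqVneq (dot x x - dot x y) 0.
  suff /eqP : x - y = 0 by rewrite subr_eq0 => /eqP ->; rewrite subrr scaler0 subr0.
  apply: dotv_eq0; rewrite !(dotvBl, dotvBr) (dotvC y x) -xy.
  by move/eqP: xy0; rewrite subr_eq0 => /eqP ->; rewrite !subrr.
have -> : dot (x - y) (x - y) = 2 * (dot x x - dot x y).
  by rewrite !(dotvBl, dotvBr) (dotvC y x) -xy; ring.
rewrite dotvBr divff ?mulf_neq0 ?pnatr_eq0 // scale1r.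
by rewrite opprB addrC subrK.
Qed.

Lemma householder_conj Q w : orthmx Q ->
  householder (w *m Q) = Q^T *m householder w *m Q.
Proof.
move=> QQ; rewrite /householder dotv_orthmx // mulmxBr mulmxBl mulmx1 mulmx1C //.
by rewrite -scalemxAr -scalemxAl trmx_mul !mulmxA.
Qed.

Lemma householder_mem (U : {vspace V}) u x :
  u \in U -> x \in U -> x *m householder u \in U.
Proof. by move=> uU xU; rewrite mul_householder memvB ?memvZ. Qed.

Lemma orthmx_prod_householder us : orthmx (\prod_(u <- us) householder u).
Proof.
elim: us => [|u us IH]; first by rewrite big_nil /orthmx -idmxE trmx1 mulmx1.
by rewrite big_cons -mulmxE; apply: orthmxM (orthmx_householder u) IH.
Qed.

Lemma prod_householder_rev us :
  \prod_(u <- rev us) householder u *m \prod_(u <- us) householder u = 1%:M.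
Proof.
elim: us => [|u us IH]; first by rewrite big_nil -idmxE mulmx1.
rewrite rev_cons -cats1 big_cat big_seq1 big_cons -!mulmxE.
by rewrite -mulmxA (mulmxA (householder u)) householderK mul1mx.
Qed.

Lemma prod_householder_mem (U : {vspace V}) us x : all (fun u => u \in U) us ->
  x \in U -> x *m \prod_(u <- us) householder u \in U.
Proof.
elim: us x => [|u us IH] x /=; first by rewrite big_nil -idmxE mulmx1.
by move=> /andP[uU usU] xU; rewrite big_cons -mulmxE mulmxA IH ?householder_mem.
Qed.

Lemma mulmx_orthmx_householder (U : {vspace V}) Q x : orthmx Q ->
    (forall z, orthc [set` U] z -> z *m Q = z) ->
  exists2 v, v \in U & x *m Q = x *m householder v.
Proof.
move=> QQ Q_fix; exists (x - x *m Q); last by rewrite householder_swap ?dotv_orthmx.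
apply: orthc_orthc_mem => y y_perp.
by rewrite dotvBl dotv_mulmx -{2}(Q_fix y y_perp) -mulmxA QQ mulmx1 subrr.
Qed.

End Reflection.

Section ReflectionOrbit.
Variables (R : realType) (n : nat) (A B : {vspace 'rV[R]_n}).
Local Notation V := 'rV[R]_n.
Local Notation dot := (@dotv R n).
Implicit Types (a p q u v w : V).

Definition refl_orbit : set V := [set w | exists2 us : seq V,
  all (fun u => (u \in A) || (u \in B)) us &
  exists2 a, a \in A & w = a *m \prod_(u <- us) householder u].

Let gen_addv us : all (fun u => (u \in A) || (u \in B)) us ->
  all (fun u => u \in (A + B)%VS) us.
Proof.
by apply: sub_all => u /orP[]; [apply: (subvP (addvSl A B)) | apply: (subvP (addvSr A B))].
Qed.

Lemma refl_orbitA a : a \in A -> refl_orbit a.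
Proof. by move=> aA; exists [::] => //; exists a; rewrite // big_nil -idmxE mulmx1. Qed.

Lemma refl_orbit_householder w u : refl_orbit w -> (u \in A) || (u \in B) ->
  refl_orbit (w *m householder u).
Proof.
move=> [us gen_us [a aA ->]] gen_u; exists (rcons us u).
  by rewrite all_rcons gen_u.
by exists a; rewrite // big_rcons -mulmxE mulmxA.
Qed.

Lemma refl_orbit_addv w : refl_orbit w -> w \in (A + B)%VS.
Proof.
move=> [us gen_us [a aA ->]]; apply: prod_householder_mem (gen_addv gen_us) _.
exact: (subvP (addvSl A B)).
Qed.

Lemma refl_orbit_step delta p q :
  (forall a w, a \in A -> w \in (A + B)%VS ->
     dot (w - a) (w - a) <= delta * dot a a -> refl_orbit w) ->
  refl_orbit p -> q \in (A + B)%VS -> dot (q - p) (q - p) <= delta * dot p p ->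
  refl_orbit q.
Proof.
move=> near [us gen_us [a aA ->]] qAB qp.
set P := \prod_(u <- us) householder u in qp *.
set P' := \prod_(u <- rev us) householder u.
have P'P : P' *m P = 1%:M by apply: prod_householder_rev.
have PP' : P *m P' = 1%:M by apply: mulmx1C.
(* The inverse word P' carries p back to a and q to a point near a. *)
have [us' gen_us' [a' a'A q'E]] : refl_orbit (q *m P').
  apply: (near a) => //.
    by apply: prod_householder_mem; rewrite // all_rev gen_addv.
  rewrite -{1 2}[a]mulmx1 -PP' mulmxA -mulmxBl dotv_orthmx.
    by rewrite -(dotv_orthmx a a (orthmx_prod_householder us)).
  exact: orthmx_prod_householder.
exists (us' ++ us); first by rewrite all_cat gen_us' gen_us.
by exists a' => //; rewrite big_cat /= -mulmxE mulmxA -q'E -mulmxA P'P mulmx1.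
Qed.


Section NontrivialIntersection.
Hypothesis capAB : (A :&: B)%VS != 0%VS.

Let e := vpick (A :&: B).

Let e_neq0 : e != 0. Proof. by rewrite vpick0. Qed.

Let eA : e \in A. Proof. by have := memv_pick (A :&: B); rewrite memv_cap => /andP[]. Qed.

Let eB : e \in B. Proof. by have := memv_pick (A :&: B); rewrite memv_cap => /andP[]. Qed.

Lemma refl_orbitB b : b \in B -> refl_orbit b.
Proof.
move=> bB; have [|t] := exists_dotv_line (x := 0) (r := dot b b) e_neq0.
  by rewrite dotv0l dotv_ge0.
rewrite add0r => tb; rewrite -(householder_swap tb).
apply: refl_orbit_householder; first by apply/refl_orbitA/memvZ.
by apply/orP; right; rewrite memvB ?memvZ.
Qed.

Lemma refl_orbit_near : exists2 delta, 0 < delta & forall a w, a \in A ->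
  w \in (A + B)%VS -> dot (w - a) (w - a) <= delta * dot a a -> refl_orbit w.
Proof.
have [C C_ge0 C_bound] := mx_dotv_bound (lin1_mx (addv_pi1 B A)).
pose delta := 1 / (4 * (C + 1)).
have delta_gt0 : 0 < delta by rewrite divr_gt0 ?mulr_gt0 //; lra.
exists delta => // a w aA wAB wa.
set d := w - a in wa.
have dBA : d \in (B + A)%VS by rewrite addvC memvB // (subvP (addvSl A B)).
set d1 := addv_pi1 B A d; set d2 := addv_pi2 B A d.
have d1d1_le : dot d1 d1 <= dot w w.
  have := C_bound d; rewrite mul_rV_lin1 -/d1 => d1d.
  have := dotvB_le w d; rewrite /d opprB addrC subrK -/d => aw.
  have Cdelta : C * delta + delta = 1 / 4 by rewrite /delta; field; lra.
  have : C * dot d d <= C * (delta * dot a a) by rewrite ler_wpM2l.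
  have := dotv_ge0 a; nra.
(* w is the reflection of w' := d1 + t e, a vector of B as long as w, in the
   vector w' - w of A. *)
have [t wt] := exists_dotv_line e_neq0 d1d1_le.
rewrite -(householder_swap wt); apply: refl_orbit_householder.
  by apply: refl_orbitB; rewrite memvD ?memvZ // memv_pi1.
apply/orP; left.
have -> : d1 + t *: e - w = t *: e - (a + d2).
  rewrite -[w](subrK a) -/d -(addv_pi1_pi2 dBA) -/d1 -/d2.
  by apply/rowP => i; rewrite !mxE; ring.
by rewrite memvB ?memvD ?memvZ // memv_pi2.
Qed.

Lemma refl_orbit_segment p q mu : refl_orbit p -> q \in (A + B)%VS -> 0 < mu ->
  (forall t, 0 <= t <= 1 -> mu <= dot (p + t *: (q - p)) (p + t *: (q - p))) ->
  refl_orbit q.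
Proof.
move=> orbit_p qAB mu_gt0 seg; have pAB := refl_orbit_addv orbit_p.
have [delta delta_gt0 near] := refl_orbit_near.
pose X := dot (q - p) (q - p) / (delta * mu).
have X_ge0 : 0 <= X by rewrite divr_ge0 ?dotv_ge0 ?mulr_ge0 ?ltW.
pose K := (Num.Def.archi_bound X).+1; pose Kr : R := K%:R.
have XK : X < Kr by apply: lt_le_trans (archi_boundP X_ge0) _; rewrite ler_nat.
have Kr_gt0 : 0 < Kr by rewrite ltr0n.
pose r k := p + (k%:R / Kr) *: (q - p).
have rK : r K = q by rewrite /r divff ?scale1r ?subrKC // pnatr_eq0.
rewrite -rK; elim: {-2}K (leqnn K) => [_|k IHk lt_kK].
  by rewrite /r mul0r scale0r addr0.
apply: (refl_orbit_step near (IHk (ltnW lt_kK))).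
  by rewrite memvD ?memvZ ?memvB.
have -> : r k.+1 - r k = Kr^-1 *: (q - p).
  by apply/rowP => i; rewrite !mxE -natr1; field; rewrite gt_eqF.
have t01 : 0 <= k%:R / Kr <= 1.
  by rewrite divr_ge0 ?ler0n ?(ltW Kr_gt0) // ler_pdivrMr // mul1r ler_nat ltnW.
have := seg _ t01; rewrite -/(r k) dotvZl dotvZr.
move: XK; rewrite /X ltr_pdivrMr ?mulr_gt0 // => XK rk.
apply: le_trans (_ : _ <= delta * mu) _; last by rewrite ler_pM2l.
rewrite mulrA -invfM ler_pdivrMl ?mulr_gt0 //.
have : 0 <= (Kr - 1) * (Kr * (delta * mu)).
  by rewrite mulr_ge0 ?subr_ge0 ?ler1n // mulr_ge0 ?ltW ?mulr_gt0.
nra.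
Qed.

Lemma refl_orbit_full v : v \in (A + B)%VS -> refl_orbit v.
Proof.
move=> vAB; have [->|v_neq0] := eqVneq v 0; first exact/refl_orbitA/mem0v.
have [e1 [e1A e1_neq0 e1v]] : exists e1, [/\ e1 \in A, e1 != 0 & 0 <= dot e1 v].
  have [ev|ev] := leP 0 (dot e v); first by exists e.
  by exists (- e); rewrite memvN oppr_eq0 dotvNl oppr_ge0 ltW.
pose mu := Num.min (dot e1 e1) (dot v v).
apply: (@refl_orbit_segment e1 v (mu / 2)) => //.
- exact: refl_orbitA.
- by rewrite divr_gt0 // lt_min !dotv_gt0.
- by move=> t t01; apply: dotv_segment_ge; rewrite // ge_min lexx ?orbT.
Qed.

End NontrivialIntersection.

End ReflectionOrbit.

Section ReflectionStable.
Variables (R : realType) (n : nat) (E : set 'rV[R]_n).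
Local Notation V := 'rV[R]_n.
Implicit Types (u v x : V) (Q : 'M[R]_n).

Definition refl_stable : set V :=
  [set v | forall x, E x -> E (x *m householder v)].

Lemma invariant_mulmx Q x : is_invariant (mulmxr Q) E -> E x -> E (x *m Q).
Proof. by move=> QE Ex; rewrite -QE; exists x. Qed.

Lemma invariant_mulmx_tr Q x : orthmx Q -> is_invariant (mulmxr Q) E ->
  E x -> E (x *m Q^T).
Proof.
by move=> QQ QE; rewrite -{1}QE => -[y Ey <-]; rewrite /mulmxr -mulmxA QQ mulmx1.
Qed.

Lemma invariant_orthmx Q : orthmx Q -> (forall x, E x -> E (x *m Q)) ->
  (forall x, E x -> E (x *m Q^T)) -> is_invariant (mulmxr Q) E.
Proof.
move=> QQ EQ EQt; apply/seteqP; split=> [_ [x Ex <-]|x Ex]; first exact: EQ.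
exists (x *m Q^T); first exact: EQt.
by rewrite /mulmxr -mulmxA mulmx1C // mulmx1.
Qed.

Lemma refl_stable_mulmx Q v : orthmx Q -> is_invariant (mulmxr Q) E ->
  refl_stable v -> refl_stable (v *m Q).
Proof.
move=> QQ QE vE x Ex; rewrite householder_conj // !mulmxA.
by apply: (invariant_mulmx QE); apply: vE; apply: (invariant_mulmx_tr QQ QE).
Qed.

Lemma refl_stable_householder u v : refl_stable u -> refl_stable v ->
  refl_stable (v *m householder u).
Proof.
move=> uE; apply: refl_stable_mulmx; first exact: orthmx_householder.
apply: invariant_orthmx (orthmx_householder u) _ _ => x; rewrite ?trmx_householder.
all: exact: uE.
Qed.

Lemma refl_orbit_stable (A B : {vspace V}) :
  (forall a, a \in A -> refl_stable a) -> (forall b, b \in B -> refl_stable b) ->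
  forall w, refl_orbit A B w -> refl_stable w.
Proof.
move=> SA SB w [us gen_us [a aA ->]].
suff : forall x, refl_stable x -> refl_stable (x *m \prod_(u <- us) householder u).
  by apply; apply: SA.
elim: us gen_us => [_ x Sx|u us IH /andP[gen_u gen_us] x Sx].
  by rewrite big_nil -idmxE mulmx1.
rewrite big_cons -mulmxE mulmxA; apply: IH => //; apply: refl_stable_householder Sx.
by case/orP: gen_u; [apply: SA | apply: SB].
Qed.

Lemma refl_stable_mulmxN Q v : orthmx Q -> is_invariant (mulmxr (- Q)) E ->
  refl_stable v -> refl_stable (v *m Q).
Proof.
move=> QQ QE /(refl_stable_mulmx (orthmxN QQ) QE).
by rewrite mulmxN /refl_stable /= householderN.
Qed.

Lemma refl_stable_stabO (L : {vspace V}) :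
  (forall Q, stabO (orthc [set` L]) Q -> is_invariant (mulmxr Q) E) ->
  forall v, v \in L -> refl_stable v.
Proof.
move=> stabE v vL x; apply: invariant_mulmx; apply: stabE.
split=> [|z z_perp]; first exact: orthmx_householder.
by apply: householder_fix; apply: z_perp.
Qed.

Lemma invariant_fix_orthc (M : {vspace V}) Q :
  (forall v, v \in M -> refl_stable v) -> stabO (orthc [set` M]) Q ->
  is_invariant (mulmxr Q) E.
Proof.
move=> SM [QQ Q_fix]; have QtQt : orthmx Q^T by rewrite /orthmx trmxK mulmx1C.
have Qt_fix z : orthc [set` M] z -> z *m Q^T = z.
  by move=> z_perp; rewrite -{1}(Q_fix z z_perp) -mulmxA QQ mulmx1.
apply: invariant_orthmx => // x Ex.
  by have [v vM ->] := mulmx_orthmx_householder x QQ Q_fix; apply: SM.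
by have [v vM ->] := mulmx_orthmx_householder x QtQt Qt_fix; apply: SM.
Qed.

End ReflectionStable.

Section SymmetryExtension.
Variables (R : realType) (n : nat) (H L : {vspace 'rV[R]_n}).
Hypothesis HL_perp : forall x, x \in H -> orthc [set` L] x -> x = 0.
Local Notation refl_img := (linfun (mulmxr (reflmx H)) @: L)%VS.

Lemma capv_refl_img_neq0 : (\dim H < \dim L)%N -> (L :&: refl_img)%VS != 0%VS.
Proof.
move=> dimHL; set K := (L :&: lker (linfun (oprojv H)))%VS.
(* R_H acts as -1 on K. *)
have K_neq0 : K != 0%VS.
  have img_sub : (linfun (oprojv H) @: L <= H)%VS.
    by apply/subvP => _ /memv_imgP[x _ ->]; rewrite lfunE oprojv_mem.
  rewrite -dimv_eq0; apply: contraTneq dimHL => K0.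
  by rewrite -(limg_ker_dim (linfun (oprojv H)) L) -/K K0 add0n -leqNgt dimvS.
apply: contraNneq K_neq0 => cap0; rewrite -subv0 -cap0; apply/subvP => e.
rewrite !memv_cap memv_ker lfunE /= => /andP[eL /eqP Pe]; rewrite eL /=.
rewrite -[e]opprK memvN; apply/memv_imgP; exists e => //.
by rewrite lfunE /= mul_reflmx Pe scaler0 sub0r.
Qed.

Lemma oprojv_limg_sup : (H <= linfun (oprojv H) @: L)%VS.
Proof.
apply/subvP => h hH; apply: orthc_orthc_mem => y y_perp.
have Py0 : oprojv H y = 0.
  apply: HL_perp; first exact: oprojv_mem.
  move=> l lL; rewrite dotv_oprojv; apply: y_perp.
  by apply/memv_imgP; exists l; rewrite ?lfunE.
by rewrite -(oprojv_id hH) dotv_oprojv Py0 dotv0r.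
Qed.

Lemma addv_sub_refl_img : (H + L <= L + refl_img)%VS.
Proof.
rewrite subv_add addvSl andbT; apply: subv_trans oprojv_limg_sup _.
apply/subvP => _ /memv_imgP[l lL ->]; rewrite lfunE /=.
have -> : oprojv H l = 2^-1 *: (l + l *m reflmx H).
  by rewrite mul_reflmx; apply/rowP => i; rewrite !mxE; field.
by apply/memvZ/memv_add => //; apply/memv_imgP; exists l; rewrite ?lfunE.
Qed.

End SymmetryExtension.

Unset Implicit Arguments.
Local Open Scope classical_set_scope.

Theorem lemma3p7 (R : realType) (n : nat) (H L : {vspace 'rV[R]_n})
  (E : set 'rV[R]_n) :
  (forall x, x \in H -> orthc [set y | y \in L] x -> x = 0) ->
  (\dim H < \dim L)%N ->
  E `<=` usphere (R:=R) (n:=n) -> E !=set0 -> closed E ->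
  (is_invariant (reflS [set y | y \in H]) E \/
   is_invariant (reflS (orthc [set y | y \in H])) E) ->
  (forall Q, stabO (orthc [set y | y \in L]) Q -> is_invariant (fun x => x *m Q) E) ->
  forall Q, stabO (orthc [set y | y \in (H + L)%VS]) Q ->
    is_invariant (fun x => x *m Q) E.
Proof.
move=> HL_perp dimHL _ _ _ reflE stabE.
have SL := refl_stable_stabO stabE.
have SB w : w \in (linfun (mulmxr (reflmx H)) @: L)%VS -> refl_stable E w.
  case/memv_imgP => l lL ->; rewrite lfunE /=.
  rewrite reflS_mx reflS_orthc_mx in reflE; case: reflE => RE.
    exact: refl_stable_mulmx (orthmx_reflmx H) RE (SL l lL).
  exact: refl_stable_mulmxN (orthmx_reflmx H) RE (SL l lL).
move=> Q; apply: invariant_fix_orthc => v vHL.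
apply: refl_orbit_stable SL SB _ _; apply: refl_orbit_full.
  exact: capv_refl_img_neq0.
exact: (subvP (addv_sub_refl_img HL_perp)).
Qed.
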